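(* For every finite simple graph $G$, one has $\mathfrak a(G)=-M(G)$, where $M(G)$ is the multiplicity of $-1$ as a root of the independence polynomial $P_G(x)$ (zero if $P_G(-1)\neq 0$). In particular, $\mathfrak a(G)=0$ if and only if $P_G(-1)\neq 0$.
   Context: Let $G$ be a finite simple graph on vertex set $[N]$, $K$ a field, $S=K[x_1,\dots,x_N]$, and $I(G)\subset S$ the edge ideal generated by $x_ix_j$ for $\{i,j\}\in E(G)$. Let $\alpha(G)$ be the independence number of $G$ (which equals $\dim S/I(G)$). The Hilbert series of $S/I(G)$ is written uniquely as $h_G(t)/(1-t)^{\alpha(G)}$ with $h_G(t)\in\mathbb Z[t]$ a polynomial whose leading coefficient is nonzero (the $h$-polynomial). The $\mathfrak a$-invariant is $\mathfrak a(G)=\deg h_G(t)-\alpha(G)$. The independence polynomial is $P_G(x)=\sum_i g_ix^i$, where $g_i$ is the number of independent sets of size $i$. *)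

From mathcomp Require Import all_boot all_order all_algebra.
Set Implicit Arguments. Unset Strict Implicit. Unset Printing Implicit Defensive.
Import Order.TTheory GRing.Theory Num.Theory.

Definition simple_graph (N : nat) (e : rel 'I_N) : Prop :=
  symmetric e /\ irreflexive e.

Definition indep (N : nat) (e : rel 'I_N) (A : {set 'I_N}) : bool :=
  [forall x in A, forall y in A, ~~ e x y].

Definition alpha (N : nat) (e : rel 'I_N) : nat :=
  \max_(A : {set 'I_N} | indep e A) #|A|.

Definition nindep (N : nat) (e : rel 'I_N) (i : nat) : nat :=
  #|[set A : {set 'I_N} | indep e A & #|A| == i]|.

Local Open Scope ring_scope.

(* independence polynomial P_G(x) = sum_i g_i x^i (all g_i = 0 for i > N) *)
Definition indep_poly (N : nat) (e : rel 'I_N) : {poly rat} :=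
  \poly_(i < N.+1) (nindep e i)%:R.

Definition Mult (N : nat) (e : rel 'I_N) : nat := mup (-1) (indep_poly e).

(* Monomials of S = K[x_1..x_N] of degree d are exponent vectors
   m : 'I_N -> nat with sum d (each exponent is then <= d, so we encode
   them as {ffun 'I_N -> 'I_d.+1}).  Since I(G) is a monomial ideal, the
   monomials not in I(G) (i.e. divisible by no x_i x_j with {i,j} an edge)
   form a K-basis of (S/I(G))_d. *)
Definition std_monomial (N : nat) (e : rel 'I_N) (d : nat)
    (m : {ffun 'I_N -> 'I_d.+1}) : bool :=
  ((\sum_(i < N) (m i : nat))%N == d) &&
  [forall i, forall j, e i j ==> ((m i : nat) == 0%N) || ((m j : nat) == 0%N)].

Definition hilb (N : nat) (e : rel 'I_N) (d : nat) : nat :=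
  #|[set m : {ffun 'I_N -> 'I_d.+1} | std_monomial e m]|.

(* h is the h-polynomial: as formal power series,
   (1 - t)^alpha(G) * sum_d hilb(d) t^d = h(t), i.e.
   HS(t) = h(t) / (1-t)^alpha(G); and h has nonzero leading coefficient. *)
Definition is_h_poly (N : nat) (e : rel 'I_N) (h : {poly int}) : Prop :=
  h != 0 /\
  forall d : nat,
    h`_d = \sum_(j < d.+1)
             (-1) ^+ j * ('C(alpha e, j))%:R * ((hilb e (d - j))%:R : int).

Definition a_inv (N : nat) (e : rel 'I_N) (h : {poly int}) : int :=
  ((size h).-1)%:Z - (alpha e)%:Z.

From mathcomp Require Import all_boot all_order all_algebra ring zify.
Import Order.TTheory GRing.Theory Num.Theory.
Set Implicit Arguments. Unset Strict Implicit. Unset Printing Implicit Defensive.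
Local Open Scope ring_scope.

(* Counting standard monomials by their support, the Hilbert series of S/I(G)
   is sum_{A independent} (t/(1-t))^|A|, so
     h_G(t) = sum_A t^|A| (1-t)^(alpha-|A|) = (1-t)^alpha P_G(t/(1-t)),
   the homogenization [homog alpha P_G].  Writing P_G = (1+x)^M Q with
   Q(-1) <> 0, hence deg Q = alpha - M, gives h_G(t) = (1-t)^(alpha-M) Q(t/(1-t)),
   whose coefficient of t^(alpha-M) is +-Q(-1) <> 0; so deg h_G = alpha - M.
   The power series t/(1-t) is handled through its truncations
   [trunc_geom D] = t + ... + t^(D-1), which agree with it modulo t^D. *)

Section Homogenization.
Variable R : comNzRingType.
Implicit Types (p q : {poly R}) (n : nat).

Lemma coef_1subX_exp k j : ((1 - 'X : {poly R}) ^+ k)`_j = (-1) ^+ j *+ 'C(k, j).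
Proof.
elim: k j => [|k IH] [|j]; rewrite ?expr0 ?coef1 ?bin0 ?bin0n ?mulr0n //.
  by rewrite exprSr mulrBr mulr1 coefB coefMX /= subr0 IH expr0 bin0.
by rewrite exprSr mulrBr mulr1 coefB coefMX /= !IH binS exprS mulrnDr mulN1r 2!mulNrn.
Qed.

Definition homog n p : {poly R} :=
  \sum_(i < n.+1) p`_i *: ('X^i * (1 - 'X) ^+ (n - i)).

Lemma size_homog_le n p : (size (homog n p) <= n.+1)%N.
Proof.
apply/leq_sizeP => j ltnj; rewrite coef_sum big1 // => i _.
rewrite coefZ coefXnM coef_1subX_exp; case: ifP => _; first by rewrite mulr0.
by rewrite bin_small ?mulr0n ?mulr0 // ltn_sub2r // (leq_ltn_trans _ ltnj) // -ltnS.
Qed.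

Lemma coef_homog_top n p : (size p <= n.+1)%N ->
  (homog n p)`_n = (-1) ^+ n * p.[-1].
Proof.
move=> szp; rewrite (horner_coef_wide _ szp) coef_sum mulr_sumr.
apply: eq_bigr => i _; have le_in : (i <= n)%N by rewrite -ltnS.
rewrite coefZ coefXnM ltnNge le_in coef_1subX_exp binn mulr1n.
rewrite -signr_odd oddB // signr_addb !signr_odd /=.
by rewrite mulrCA.
Qed.

Lemma homog_mulXD1 n p : (size p <= n.+1)%N -> homog n.+1 (('X + 1) * p) = homog n p.
Proof.
move=> szp; rewrite /homog.
under eq_bigr => i _ do rewrite mulrDl mul1r coefD coefXM scalerDl.
rewrite big_split /= big_ord_recl /= scale0r add0r [X in _ + X]big_ord_recr /=.
rewrite [p`_n.+1](leq_sizeP _ _ szp) // scale0r addr0 -big_split /=.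
apply: eq_bigr => i _; rewrite -scalerDr; congr (_ *: _).
have le_in : (i <= n)%N by rewrite -ltnS.
rewrite subSS subSn // exprS exprSr.
set Y := (1 - 'X) ^+ (n - i); set Z := 'X^i; ring.
Qed.

End Homogenization.

Lemma size_homog (R : idomainType) n (p : {poly R}) :
  (size p <= n.+1)%N -> p.[-1] != 0 -> size (homog n p) = n.+1.
Proof.
move=> szp p_1; apply/eqP; rewrite eqn_leq size_homog_le ltnNge /=.
apply: contra p_1 => /leq_sizeP/(_ n (leqnn n))/eqP.
by rewrite coef_homog_top // mulf_eq0 signr_eq0.
Qed.

Lemma XaddN1E (R : nzRingType) : 'X + 1 = 'X - (-1)%:P :> {poly R}.
Proof. by rewrite polyCN opprK. Qed.

Lemma homog_mulXD1X (R : idomainType) k n (p : {poly R}) : p != 0 ->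
  (size p + k <= n.+1)%N -> homog n (('X + 1) ^+ k * p) = homog (n - k) p.
Proof.
move=> p0; elim: k n => [|k IH] [|n] szp; rewrite ?expr0 ?mul1r ?subn0 //.
  by move: szp; rewrite addnS ltnS leqNgt ltn_addr // size_poly_gt0.
rewrite exprS -mulrA homog_mulXD1 ?IH ?subSS //; first by rewrite -ltnS -addnS.
rewrite size_mul ?expf_neq0 ?XaddN1E ?polyXsubC_eq0 // size_exp_XsubC addSn.
by rewrite addnC -ltnS -addnS.
Qed.

Section Multiplicity.
Variable F : fieldType.
Implicit Types (x : F) (p : {poly F}).

Lemma mup_lt_size x p : p != 0 -> (mup x p < size p)%N.
Proof. by move=> p0; rewrite -(size_exp_XsubC _ x) dvdp_leq // -mup_geq. Qed.

Lemma mup_eq0 x p : p != 0 -> (mup x p == 0%N) = ~~ root p x.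
Proof. by move=> p0; rewrite -leqn0 mup_leq // expr1 dvdp_XsubCl. Qed.

Lemma size_homog_mup n p : size p = n.+1 -> size (homog n p) = (n - mup (-1) p).+1.
Proof.
move=> szp; have p0 : p != 0 by rewrite -size_poly_gt0 szp.
have [m [q]] := multiplicity_XsubC p (-1); rewrite p0 /= => q_1 pE.
have q0 : q != 0 by apply: contraNneq p0 => q0; rewrite pE q0 mul0r.
have szq : (size q + m = n.+1)%N.
  by rewrite -szp pE size_mul ?expf_neq0 ?polyXsubC_eq0 // size_exp_XsubC addnS.
have -> : mup (-1) p = m by rewrite pE mupMr // mup_XsubCX eqxx.
have le_q : (size q <= (n - m).+1)%N by lia.
by rewrite pE mulrC -XaddN1E homog_mulXD1X ?szq // size_homog.
Qed.

End Multiplicity.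

Section CongruenceModXn.
Variables (R : comNzRingType) (n : nat).
Implicit Types p q : {poly R}.

Definition congX p q := exists r, p = q + 'X^n * r.

Lemma congX_coef p q i : congX p q -> (i < n)%N -> p`_i = q`_i.
Proof. by move=> [r ->] lt_in; rewrite coefD coefXnM lt_in addr0. Qed.

Lemma congX_refl p : congX p p.
Proof. by exists 0; rewrite mulr0 addr0. Qed.

Lemma congXD p1 q1 p2 q2 : congX p1 q1 -> congX p2 q2 -> congX (p1 + p2) (q1 + q2).
Proof. by move=> [r1 ->] [r2 ->]; exists (r1 + r2); ring. Qed.

Lemma congXM p1 q1 p2 q2 : congX p1 q1 -> congX p2 q2 -> congX (p1 * p2) (q1 * q2).
Proof.
by move=> [r1 ->] [r2 ->]; exists (r1 * q2 + q1 * r2 + 'X^n * r1 * r2); ring.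
Qed.

Lemma congXX p q k : congX p q -> congX (p ^+ k) (q ^+ k).
Proof.
move=> pq; elim: k => [|k IH]; first by rewrite !expr0; apply: congX_refl.
by rewrite !exprS; apply: congXM.
Qed.

Lemma congX_sum (I : Type) (r : seq I) (P : pred I) (F G : I -> {poly R}) :
  (forall i, P i -> congX (F i) (G i)) ->
  congX (\sum_(i <- r | P i) F i) (\sum_(i <- r | P i) G i).
Proof.
by move=> FG; apply: (big_ind2 congX) => //; [apply: congX_refl | apply: congXD].
Qed.

End CongruenceModXn.

Definition supp N D (m : {ffun 'I_N -> 'I_D}) : {set 'I_N} :=
  [set v | m v != 0 :> nat].

Section TruncatedGeometricSeries.
Variable R : comNzRingType.

Definition trunc_geom D : {poly R} := \sum_(k < D | (0 < k)%N) 'X^k.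

Lemma trunc_geomSS D : trunc_geom D.+2 = trunc_geom D.+1 + 'X^(D.+1).
Proof.
by rewrite /trunc_geom !(big_mkcond (fun k : 'I__ => (0 < k)%N)) big_ord_recr.
Qed.

Lemma mul1subX_trunc_geom D : (1 - 'X) * trunc_geom D.+1 = 'X - 'X^(D.+1).
Proof.
elim: D => [|D IH].
  by rewrite /trunc_geom big_mkcond big_ord1 /= mulr0 expr1 subrr.
by rewrite trunc_geomSS mulrDr IH !exprS; ring.
Qed.

Lemma congX_trunc_geom n D : (0 < n <= D)%N -> congX n (trunc_geom D) (trunc_geom n).
Proof.
case: n => // n /= /subnK <-; elim: (D - n.+1)%N => [|k [r IH]].
  exact: congX_refl.
by rewrite addSn addnS trunc_geomSS -addnS IH exprD; exists (r + 'X^k); ring.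
Qed.

Lemma trunc_geom_exp_card N i (A : {set 'I_N}) :
  trunc_geom i.+1 ^+ #|A| =
  \sum_(m : {ffun 'I_N -> 'I_i.+1} | supp m == A) 'X^(\sum_v m v).
Proof.
pose F v (k : 'I_i.+1) : {poly R} := if (v \in A) == (0 < k)%N then 'X^k else 0.
have -> : trunc_geom i.+1 ^+ #|A| = \prod_v \sum_k F v k.
  rewrite -prodr_const big_mkcond /=; apply: eq_bigr => v _.
  case: (boolP (v \in A)) => vA.
    rewrite /trunc_geom big_mkcond /=; apply: eq_bigr => k _.
    by rewrite /F vA; case: (0 < k)%N.
  rewrite (bigD1 (ord0 : 'I_i.+1)) //= big1 ?addr0 => [|k nk].
    by rewrite /F (negbTE vA).
  by rewrite /F (negbTE vA) lt0n nk.
rewrite bigA_distr_bigA [RHS]big_mkcond /=; apply: eq_bigr => m _.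
case: eqP => [mA|neq_A].
  by rewrite -prodrXr; apply: eq_bigr => v _; rewrite /F -mA inE lt0n eqxx.
have [v Av] : exists v, (v \in A) != (0 < m v)%N.
  apply/existsP; apply: contra_notT neq_A => /existsPn eqA.
  by apply/setP => v; rewrite inE -lt0n; apply/esym/eqP; rewrite -[_ == _]negbK eqA.
by rewrite (bigD1 v) //= /F (negbTE Av) mul0r.
Qed.

End TruncatedGeometricSeries.

Section IndependenceComplex.
Variables (N : nat) (e : rel 'I_N).
Implicit Types A : {set 'I_N}.

Lemma std_monomialE d (m : {ffun 'I_N -> 'I_d.+1}) :
  std_monomial e m = ((\sum_v m v)%N == d) && indep e (supp m).
Proof.
congr (_ && _); apply/forallP/forallP => [edge0 v | indep_m v].
  apply/implyP; rewrite inE => mv; apply/forallP => w; apply/implyP.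
  rewrite inE => mw; apply/negP => evw.
  by move: (forallP (edge0 v) w); rewrite evw /= (negbTE mv) (negbTE mw).
apply/forallP => w; apply/implyP; apply: contraTT; rewrite negb_or => /andP [mv mw].
by move: (indep_m v); rewrite inE mv => /forallP /(_ w); rewrite inE mw.
Qed.

Definition hilb_series D : {poly int} := \sum_(A | indep e A) trunc_geom int D ^+ #|A|.

Lemma hilb_seriesE i : hilb_series i.+1 =
  \sum_(m : {ffun 'I_N -> 'I_i.+1} | indep e (supp m)) 'X^(\sum_v m v).
Proof.
rewrite (partition_big (@supp N i.+1) (indep e)) //=; apply: eq_bigr => A indepA.
rewrite trunc_geom_exp_card; apply: eq_bigl => m.
by case: eqP => [->|]; rewrite ?andbF ?indepA.
Qed.

Lemma coef_hilb_series_diag i : (hilb_series i.+1)`_i = (hilb e i)%:R.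
Proof.
rewrite hilb_seriesE coef_sum /hilb -sum1_card natr_sum big_mkcond [RHS]big_mkcond /=.
apply: eq_bigr => m _; rewrite inE std_monomialE andbC coefXn eq_sym.
by case: (indep e (supp m)); case: eqP.
Qed.

Lemma coef_hilb_series i D : (i < D)%N -> (hilb_series D)`_i = (hilb e i)%:R.
Proof.
move=> lt_iD; rewrite -coef_hilb_series_diag; apply: (congX_coef _ (ltnSn i)).
by apply: congX_sum => A _; apply/congXX/congX_trunc_geom.
Qed.

Lemma leq_card_alpha A : indep e A -> (#|A| <= alpha e)%N.
Proof. exact: leq_bigmax_cond. Qed.

Lemma alpha_witness : exists2 A, indep e A & #|A| = alpha e.
Proof.
have indep0 : indep e set0 by apply/forallP => v; rewrite in_set0.
have [|A] := @eq_bigmax_cond _ (indep e) (fun A => #|A|); last by exists A.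
by apply/card_gt0P; exists set0.
Qed.

Lemma alpha_leqN : (alpha e <= N)%N.
Proof.
by have [A _ <-] := alpha_witness; rewrite -[X in (_ <= X)%N]card_ord max_card.
Qed.

Lemma size_indep_poly : size (indep_poly e) = (alpha e).+1.
Proof.
apply/anti_leq/andP; split.
  apply/leq_sizeP => j lt_aj; rewrite coef_poly; case: ifP => // _.
  rewrite /nindep (_ : [set A | _] = set0) ?cards0 //; apply/setP => A.
  rewrite !inE; apply/andP => -[/leq_card_alpha le_Aa /eqP cardA].
  by move: lt_aj; rewrite -cardA ltnNge le_Aa.
rewrite ltnNge; apply/negP => /leq_sizeP /(_ _ (leqnn _)) /eqP.
rewrite coef_poly ltnS alpha_leqN pnatr_eq0; apply/negP; rewrite -lt0n.
have [A indepA cardA] := alpha_witness.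
by apply/card_gt0P; exists A; rewrite inE indepA cardA /=.
Qed.

Definition hpoly : {poly int} :=
  \sum_(A | indep e A) 'X^#|A| * (1 - 'X) ^+ (alpha e - #|A|).

Lemma congX_hpoly d : congX d.+1 ((1 - 'X) ^+ alpha e * hilb_series d.+1) hpoly.
Proof.
rewrite mulr_sumr; apply: congX_sum => A /leq_card_alpha /subnK {1}<-.
rewrite exprD -mulrA -exprMn mul1subX_trunc_geom mulrC.
by apply/congXM/congX_refl/congXX; exists (-1); ring.
Qed.

Lemma coef_hpoly d : hpoly`_d =
  \sum_(j < d.+1) (-1) ^+ j * ('C(alpha e, j))%:R * ((hilb e (d - j))%:R : int).
Proof.
rewrite -(congX_coef (congX_hpoly d) (ltnSn d)) coefM.
apply: eq_bigr => j _; rewrite coef_1subX_exp mulr_natr coef_hilb_series //.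
by rewrite ltnS leq_subr.
Qed.

Lemma map_hpoly : map_poly intr hpoly = homog (alpha e) (indep_poly e) :> {poly rat}.
Proof.
rewrite rmorph_sum /homog.
under eq_bigr => A _ do rewrite rmorphM !rmorphXn rmorphB rmorph1 /= map_polyX.
pose card_ord A : 'I_(alpha e).+1 := inord #|A|.
rewrite (partition_big card_ord xpredT) //=; apply: eq_bigr => j _.
have lt_jN : (j < N.+1)%N by rewrite ltnS (leq_trans _ alpha_leqN) // -ltnS.
rewrite coef_poly lt_jN /nindep -sum1_card natr_sum scaler_suml.
apply: eq_big => [A | A /andP [indepA /eqP <-]]; rewrite ?inE.
  case: (boolP (indep e A)) => //= /leq_card_alpha le_Aa.
  by rewrite -val_eqE /= inordK.
by rewrite scale1r inordK // ltnS leq_card_alpha.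
Qed.

Lemma size_hpoly : size hpoly = (alpha e - Mult e).+1.
Proof.
rewrite -(size_map_inj_poly (@intr_inj rat) (rmorph0 _)) map_hpoly.
exact/size_homog_mup/size_indep_poly.
Qed.

Lemma is_h_poly_hpoly : is_h_poly e hpoly.
Proof. by split; [rewrite -size_poly_gt0 size_hpoly | apply: coef_hpoly]. Qed.

Lemma is_h_poly_eq h : is_h_poly e h -> h = hpoly.
Proof. by case=> _ coef_h; apply/polyP => d; rewrite coef_h coef_hpoly. Qed.

Lemma a_inv_hpoly : a_inv e hpoly = - (Mult e)%:Z.
Proof.
have le_Ma : (Mult e <= alpha e)%N.
  by rewrite -ltnS -size_indep_poly mup_lt_size // -size_poly_gt0 size_indep_poly.
by rewrite /a_inv size_hpoly succnK -(subzn le_Ma) addrAC subrr add0r.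
Qed.

End IndependenceComplex.

Theorem corollary1p3 (N : nat) (e : rel 'I_N) :
  simple_graph e ->
  (exists h : {poly int}, is_h_poly e h) /\
  (forall h : {poly int}, is_h_poly e h ->
     a_inv e h = - ((Mult e)%:Z) /\
     (a_inv e h = 0 <-> (indep_poly e).[-1] != 0)).
Proof.
move=> _; split=> [|h /is_h_poly_eq ->].
  by exists (hpoly e); apply: is_h_poly_hpoly.
have P0 : indep_poly e != 0 by rewrite -size_poly_gt0 size_indep_poly.
rewrite a_inv_hpoly; split=> //; rewrite -/(root (indep_poly e) (-1)).
by rewrite -mup_eq0 // -/(Mult e) -eqz_nat -oppr_eq0; split => /eqP.
Qed.
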